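(* Let $p,n$ be positive integers and $c=\gcd(p,n)$. Then the quandle counting matrix of $\widetilde{\mathcal{T}(p,2)}$ with respect to the dihedral quandle $\mathbb{Z}_n$ is $\Phi^{M_n}_{\mathbb{Z}_n}(\widetilde{\mathcal{T}(p,2)})=cI_n$, where $I_n$ is the $n\times n$ identity matrix.
   Context: $\mathbb{Z}_n=\{0,\dots,n-1\}$ is the dihedral quandle ($x\triangleright y=2y-x$ mod $n$). For a $1$-linkoid $L$ with fundamental pointed quandle $P(L)$ and a finite quandle $X=\{x_1,\dots,x_k\}$, the quandle counting matrix $\Phi^{M_k}_X(L)$ is the $k\times k$ matrix with $(i,j)$ entry $|\hom(P(L),(X,x_i,x_j))|$ (basepoint-preserving homomorphisms). Here $P(\widetilde{\mathcal{T}(p,2)})=(Q,x_1,x_{p+1})$ with $Q=\langle x_1,\dots,x_{p+1}\mid x_p=x_2\triangleright x_{p+1},\ x_i=x_{i+2}\triangleright x_{i+1}\ (1\le i\le p-1)\rangle$, the fundamental pointed quandle of the $1$-linkoid of $(p,2)$-torus type. *)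

From mathcomp Require Import all_boot all_order all_algebra.
Set Implicit Arguments. Unset Strict Implicit. Unset Printing Implicit Defensive.

Definition dih_op (n : nat) (x y : 'I_n) : nat := (2 * y + (n - x)) %% n.
Lemma dih_op_lt n (x y : 'I_n) : dih_op x y < n.
Proof. by rewrite /dih_op ltn_mod; case: n x y => [[]|]. Qed.
Definition dih (n : nat) (x y : 'I_n) : 'I_n := Ordinal (dih_op_lt x y).

(* A coloring of the presentation
     Q = < x_1,...,x_{p+1} | x_p = x_2 |> x_{p+1},
                              x_i = x_{i+2} |> x_{i+1}  (1 <= i <= p-1) >
   by a quandle (X, op): an assignment of the generators (x_{k+1} is indexed
   by k : 'I_p.+1) satisfying the relations.  By the universal property of a
   presented quandle these are exactly the quandle homomorphisms Q -> X. *)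
Definition torus_coloring (X : finType) (op : X -> X -> X) (p : nat)
    (f : {ffun 'I_p.+1 -> X}) : bool :=
  let g k := f (inord k) in
  (g p.-1 == op (g 1) (g p)) &&
  [forall k : 'I_p.+1, (k < p.-1) ==> (g k == op (g k.+2) (g k.+1))].

(* |hom(P(T(p,2)~), (X, a, b))| : basepoint-preserving homs, basepoints x_1, x_{p+1} *)
Definition torus_hom_count (X : finType) (op : X -> X -> X) (p : nat) (a b : X)
  : nat :=
  #|[set f : {ffun 'I_p.+1 -> X} |
      [&& torus_coloring op f, f ord0 == a & f ord_max == b]]|.

(* Quandle counting matrix w.r.t. the dihedral quandle Z_n, with x_i = i-1. *)
Definition dih_counting_matrix (n p : nat) : 'M[nat]_n :=
  \matrix_(i < n, j < n) torus_hom_count (@dih n) p i j.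

From mathcomp Require Import all_boot all_order all_algebra zify.
Set Implicit Arguments. Unset Strict Implicit. Unset Printing Implicit Defensive.
Import GRing.Theory.

(* A coloring g_0, ..., g_p by Z/n must satisfy g_k + g_(k+2) = 2 g_(k+1), so
   it is an arithmetic progression g_k = a + k d; the remaining relation
   g_(p-1) = 2 g_p - g_1 then says exactly that p d = 0, which also gives
   g_p = g_0.  Thus colorings based at a correspond to the p-torsion elements
   d of Z/n, of which there are gcd(p, n), and no coloring has g_p <> g_0. *)

Lemma card_ord_dvdn (c m : nat) : 0 < m -> #|[set d : 'I_(c * m) | m %| d]| = c.
Proof.
move=> m_gt0; have mul_lt (i : 'I_c) : i * m < c * m by rewrite ltn_pmul2r.
rewrite -[c in RHS]card_ord -(card_imset _ (f := fun i => Ordinal (mul_lt i))).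
  congr #|pred_of_set _|; apply/setP => d; rewrite inE; apply/idP/imsetP.
  - move=> m_dvd_d; have d_lt : d %/ m < c by rewrite ltn_divLR // ltn_ord.
    by exists (Ordinal d_lt) => //; apply: val_inj; rewrite /= divnK.
  - by case=> i _ ->; rewrite /= dvdn_mull.
by move=> i j /(congr1 val) /eqP; rewrite /= eqn_pmul2r // => /eqP /val_inj.
Qed.

Lemma card_ord_dvdn_mul (p n : nat) : 0 < n -> #|[set d : 'I_n | n %| p * d]| = gcdn p n.
Proof.
move=> n_gt0; set c := gcdn p n.
have c_gt0 : 0 < c by rewrite gcdn_gt0 n_gt0 orbT.
have [n' def_n] : {n' | n = n' * c} by exists (n %/ c); rewrite divnK ?dvdn_gcdr.
have [p' def_p] : {p' | p = p' * c} by exists (p %/ c); rewrite divnK ?dvdn_gcdl.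
have n'_gt0 : 0 < n' by move: n_gt0; rewrite def_n muln_gt0 => /andP[].
have co_n'p' : coprime n' p'.
  by rewrite /coprime gcdnC -(eqn_pmul2r c_gt0) mul1n muln_gcdl -def_p -def_n.
have -> : [set d : 'I_n | n %| p * d] = [set d : 'I_n | n' %| d].
  apply/setP => d; rewrite !inE [n in n %| _]def_n def_p mulnAC.
  by rewrite dvdn_pmul2r // Gauss_dvdr.
by clearbody c; rewrite def_n mulnC; apply: card_ord_dvdn.
Qed.

Section SecondDifference.

Variable V : zmodType.
Local Open Scope ring_scope.

Lemma arith_prog_mid (a d : V) (k : nat) :
  (a + d *+ k.+1) *+ 2 = (a + d *+ k) + (a + d *+ k.+2).
Proof.
have -> : a + d *+ k.+2 = a + d *+ k.+1 + d by rewrite mulrSr addrA.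
have -> : a + d *+ k.+1 = a + d *+ k + d by rewrite mulrSr addrA.
by rewrite mulr2n addrCA.
Qed.

Lemma second_difference0_arith (g : nat -> V) (q : nat) :
    (forall k, (k < q)%N -> g k + g k.+2 = g k.+1 *+ 2) ->
  forall k, (k <= q.+1)%N -> g k = g 0 + (g 1 - g 0) *+ k.
Proof.
move=> g_rec; set d := g 1 - g 0.
suff g_lin k : (k <= q)%N -> g k = g 0 + d *+ k /\ g k.+1 = g 0 + d *+ k.+1.
  by case=> [_|k /g_lin[]//]; rewrite addr0.
elim: k => [_|k IHk k_lt]; first by rewrite addr0 addrC subrK.
have [g_k g_k1] := IHk (ltnW k_lt); split => //.
by apply: (addrI (g k)); rewrite g_rec // g_k1 arith_prog_mid -g_k.
Qed.

End SecondDifference.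

Section DihedralColorings.

Variables m p : nat.
Hypothesis p_gt0 : (0 < p)%N.
Local Notation n := m.+1.
Local Open Scope ring_scope.

Lemma eq_dih (x y z : 'I_n) : (z == dih x y) = (z + x == y *+ 2).
Proof.
have -> : dih x y = y *+ 2 - x.
  by apply: val_inj; rewrite /= /dih_op mulr1n modnDm mul2n -addnn.
by rewrite eq_sym subr_eq eq_sym.
Qed.

Definition arith_coloring (a d : 'I_n) : {ffun 'I_p.+1 -> 'I_n} :=
  [ffun k : 'I_p.+1 => a + d *+ k].

Lemma arith_coloring_inord (a d : 'I_n) k :
  (k <= p)%N -> arith_coloring a d (inord k) = a + d *+ k.
Proof. by move=> k_le; rewrite ffunE inordK. Qed.

Lemma torus_coloring_arith (a d : 'I_n) :
  torus_coloring (@dih n) (arith_coloring a d) = (d *+ p == 0).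
Proof.
rewrite /torus_coloring eq_dih !arith_coloring_inord ?leq_pred //.
set rec := [forall _, _]; have -> : rec.
  apply/forallP => k; apply/implyP => k_lt.
  by rewrite eq_dih !arith_coloring_inord ?arith_prog_mid //; lia.
rewrite andbT mulr1n -[in d *+ p](prednK p_gt0) arith_prog_mid.
by rewrite !(inj_eq (addrI _)) mulrSr -[d in d == _]add0r (inj_eq (addIr _)) eq_sym.
Qed.

Lemma torus_coloring_is_arith (f : {ffun 'I_p.+1 -> 'I_n}) :
  torus_coloring (@dih n) f -> f = arith_coloring (f ord0) (f (inord 1) - f ord0).
Proof.
move=> /andP[_ /forallP rec].
have f_lin := @second_difference0_arith _ (fun k => f (inord k)) p.-1.
have f0 : f (inord 0) = f ord0 by congr (f _); apply: val_inj; rewrite /= inordK.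
apply/ffunP => k; rewrite ffunE -f0 -[k in LHS]inord_val; apply: f_lin.
- move=> i i_lt; have := rec (inord i); rewrite inordK; last by lia.
  by rewrite i_lt /= eq_dih => /eqP.
- by have := ltn_ord k; lia.
Qed.

Lemma torus_coloring_ord_max (f : {ffun 'I_p.+1 -> 'I_n}) :
  torus_coloring (@dih n) f -> f ord_max = f ord0.
Proof.
move=> col; have def_f := torus_coloring_is_arith col.
rewrite def_f torus_coloring_arith in col.
by rewrite [in LHS]def_f ffunE (eqP col) addr0.
Qed.

Lemma card_Zp_mulrn_eq0 : #|[set d : 'I_n | d *+ p == 0]| = gcdn p n.
Proof.
rewrite -card_ord_dvdn_mul //; apply: eq_card => d.
by rewrite !inE Zp_mulrn -val_eqE /= mulnC.
Qed.

Lemma based_torus_colorings (a : 'I_n) :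
  [set f | torus_coloring (@dih n) f & f ord0 == a] =
  arith_coloring a @: [set d | d *+ p == 0].
Proof.
apply/setP => f; rewrite !inE; apply/andP/imsetP => [[col /eqP f0] | [d]].
- exists (f (inord 1) - a); last by rewrite -f0 -torus_coloring_is_arith.
  by rewrite inE -(torus_coloring_arith a) -f0 -torus_coloring_is_arith.
- by rewrite inE -(torus_coloring_arith a) => col ->; rewrite ffunE mulr0n addr0.
Qed.

Lemma torus_hom_count_dih (a b : 'I_n) :
  torus_hom_count (@dih n) p a b = if a == b then gcdn p n else 0%N.
Proof.
rewrite /torus_hom_count; case: eqVneq => [<-{b} | neq_ab].
  rewrite -card_Zp_mulrn_eq0 -(card_in_imset (f := arith_coloring a)).
    rewrite -based_torus_colorings; apply: eq_card => f; rewrite !inE.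
    case: (boolP (torus_coloring _ f)) => //= /torus_coloring_ord_max ->.
    by rewrite andbb.
  move=> d1 d2 _ _ /ffunP/(_ (inord 1)).
  by rewrite !arith_coloring_inord // !mulr1n => /addrI.
apply/eqP; rewrite cards_eq0; apply/eqP/setP => f; rewrite !inE.
apply/and3P => -[/torus_coloring_ord_max -> /eqP -> /eqP eq_ab].
by rewrite eq_ab eqxx in neq_ab.
Qed.

End DihedralColorings.

Theorem corollary6p7 (p n : nat) (hp : 0 < p) (hn : 0 < n) :
  dih_counting_matrix n p = ((gcdn p n)%:M)%R.
Proof.
case: n hn => // m _; apply/matrixP => i j.
by rewrite !mxE torus_hom_count_dih //; case: eqVneq.
Qed.
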